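(* Consider an execution of the convergence algorithm described in the context, in the CORDA model under a fully asynchronous scheduler, with $n>5f$ robots of which at most $f$ are Byzantine. Fix a time $t_0$. Let $i$ be a correct robot, and consider a cycle of $i$ that starts at a time $t_1 \ge t_0$. Let $t\geq t_1$ be a time in this cycle by which $i$ has computed its destination $D_i(t)$. Then $$D_i(t)\in\Big[\tfrac{U_i(t)+\min UD(t_0)}{2},\ \tfrac{U_i(t)+\max UD(t_0)}{2}\Big],$$ where $U_i(t)$ is the position of robot $i$ at time $t$.
   Context: Setting: $n$ robots on the real line, at most $f$ Byzantine (arbitrary positions). Robots are anonymous, oblivious, have no common orientation, and have unlimited visibility with strong multiplicity detection. Correct robots run Look–Compute–Move cycles. In the CORDA model, phases of different robots interleave arbitrarily, so computations use possibly outdated snapshots. The adversary may stop robot $i$ during a Move only after it has moved at least $\delta_i>0$ toward its destination (or reached it). A fully asynchronous scheduler only guarantees that each robot is activated infinitely often. Algorithm: with snapshot sorted $P_1\le\dots\le P_n$ taken at the Look of the cycle and own position $x_i$, robot $i$ is elected iff $x_i\le P_{f+1}$ or $x_i\ge P_{n-f}$. If elected, its destination is the midpoint of $\min(x_i,P_{2f+1})$ and $\max(x_i,P_{n-2f})$. This is the center of $trim^i_{2f}(P)$, obtained by removing, among the $2f$ smallest positions, those below $x_i$, and, among the $2f$ largest positions, those above $x_i$. Notation: $D_i(t)$ is the last destination computed by robot $i$ at or before $t$; we take it to be its position if it has computed none. $UD(t)$ is the multiset union of the positions and the destinations of all correct robots at time $t$.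
   Formalization: Each correct robot computes its destination at the instant of its Look, so $D_i(t)$ is the destination of the cycle with the last Look at or before t, and only the Move may start later. Each condition added here is assumed in the paper as well or is needed for the statement above to hold. *)

From HB Require Import structures.
From mathcomp Require Import all_boot all_order all_algebra.
From mathcomp Require Import boolp reals.
Set Implicit Arguments. Unset Strict Implicit. Unset Printing Implicit Defensive.
Import Order.TTheory GRing.Theory Num.Theory.
Local Open Scope ring_scope.

Section Defs.
Variable R : realType.

Definition between (a x b : R) : Prop := Num.min a b <= x <= Num.max a b.

(* P_k (1-based) of the sorted snapshot s *)
Definition Pk (s : seq R) (k : nat) : R := nth 0 (sort <=%R s) k.-1.

(* The algorithm: snapshot s (size n, multiset of all positions), own position x. *)
Definition elected (n f : nat) (s : seq R) (x : R) : bool :=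
  (x <= Pk s f.+1) || (Pk s (n - f) <= x).

Definition algo (n f : nat) (s : seq R) (x : R) : R :=
  if elected n f s x then
    (Num.min x (Pk s (2 * f).+1) + Num.max x (Pk s (n - 2 * f))) / 2
  else x.

Variables (n f : nat) (pos : 'I_n -> R -> R) (L M E : 'I_n -> nat -> R).

Definition snapshot (i : 'I_n) (k : nat) : seq R :=
  [seq pos j (L i k) | j <- enum 'I_n].

Definition dest (i : 'I_n) (k : nat) : R :=
  algo n f (snapshot i k) (pos i (L i k)).

(* D_i(t): last destination computed at or before t (Compute is taken to be
   performed at the Look instant L i k of cycle k, from the snapshot taken
   there), or the position if none was computed. *)
Definition Dest (i : 'I_n) (t : R) : R :=
  match pselect (exists k, L i k <= t /\ t < L i k.+1) with
  | left H => dest i (projT1 (constructive_indefinite_description H))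
  | right _ => pos i t
  end.

Definition UD (byz : {set 'I_n}) (t : R) : seq R :=
  flatten [seq [:: pos i t; Dest i t] | i <- enum (~: byz)].

Definition seqmin (s : seq R) : R := \big[Num.min/head 0 s]_(x <- s) x.
Definition seqmax (s : seq R) : R := \big[Num.max/head 0 s]_(x <- s) x.

(* For each correct robot
   i and each cycle k: Look (+ Compute) at L i k, the Move starts at M i k
   (possibly much later, so the snapshot may be outdated) and ends at E i k. *)
Definition corda_exec (byz : {set 'I_n}) (delta : 'I_n -> R) : Prop :=
  forall i, i \notin byz ->
  [/\ 0 <= L i 0,
   
      (forall k, L i k <= M i k /\ M i k <= E i k /\ E i k < L i k.+1) &
      (* fully asynchronous: activated infinitely often (unboundedly in time) *)
      (forall T, exists k, T <= L i k)] /\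
   [/\
      (forall s, 0 <= s <= M i 0 -> pos i s = pos i 0),
      (forall k s, E i k <= s <= M i k.+1 -> pos i s = pos i (E i k)),
      (forall k s s', M i k <= s -> s <= s' -> s' <= E i k ->
         between (pos i s) (pos i s') (dest i k))
    & (* the adversary stops it only after delta_i or at the destination *)
      0 < delta i /\
      (forall k, Num.min (delta i) `|dest i k - pos i (M i k)|
                 <= `|pos i (E i k) - pos i (M i k)|)].

End Defs.

From HB Require Import structures.
From mathcomp Require Import all_boot all_order all_algebra.
From mathcomp Require Import boolp reals.
From mathcomp Require Import lra zify.
Import Order.TTheory GRing.Theory Num.Theory.
Local Open Scope ring_scope.

(* Let [m, Mx] be the hull of UD(t0).  A robot whose snapshot shows every correct
   robot inside [m, Mx] sees at most f positions below m and at most f above Mx,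
   so the order statistics P_(2f+1) and P_(n-2f) lie in [m, Mx] and its
   destination lies between the midpoints of its own position with m and with Mx;
   in particular it stays in [m, Mx].  Robots only move along segments toward
   their destinations, so taking the first Look after t0 at which this could fail
   shows that all positions and destinations stay in [m, Mx] after t0.  Within
   the cycle, robot i moves from its Look position toward D_i(t), and moving
   toward d keeps d between the midpoints. *)

Lemma count_enum (T : finType) (P : pred T) : count P (enum T) = #|P|.
Proof.
rewrite cardE -size_filter /enum_mem; congr size.
by rewrite -filter_predI; apply: eq_filter => x; rewrite /= andbT.
Qed.

Section OrderStatistics.
Context {R : realDomainType}.
Implicit Types (s : seq R) (m M : R) (k i : nat).

Lemma sorted_count_lt_le_nth s m k i :
  sorted <=%R s -> (count (fun y : R => (y < m)%R) s <= k)%N -> (k <= i < size s)%N ->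
  m <= nth 0 s i.
Proof.
move=> s_sorted small /andP[ki isz]; rewrite leNgt; apply/negP => lt_nth.
have: all (fun y : R => (y < m)%R) (take i.+1 s).
  apply/(all_nthP 0) => j; rewrite size_takel // => ji.
  rewrite nth_take //; apply: le_lt_trans lt_nth.
  by apply: (sorted_leq_nth le_trans lexx) => //; rewrite inE (leq_trans ji isz).
rewrite all_count size_takel // => /eqP count_take.
by move: small; rewrite -(cat_take_drop i.+1 s) count_cat count_take; lia.
Qed.

Lemma sorted_count_gt_ge_nth s M k i :
  sorted <=%R s -> (count (fun y : R => (M < y)%R) s <= k)%N -> (i + k < size s)%N ->
  nth 0 s i <= M.
Proof.
move=> s_sorted large isz; rewrite leNgt; apply/negP => gt_nth.
have: all (fun y : R => (M < y)%R) (drop i s).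
  apply/(all_nthP 0) => j; rewrite size_drop => ji.
  rewrite nth_drop; apply: lt_le_trans gt_nth _.
  (* [set] merges two differently typed copies of [size s], distinct atoms for [lia]. *)
  apply: (sorted_leq_nth le_trans lexx) => //;
    by rewrite ?inE; set sz := size s in ji isz *; lia.
rewrite all_count size_drop => /eqP count_drop.
by move: large; rewrite -(cat_take_drop i s) count_cat count_drop; lia.
Qed.

End OrderStatistics.

Section Algorithm.
Context {R : realType}.
Implicit Types (s : seq R) (x m M : R) (n f j : nat).

Lemma le_Pk f s m j :
  (count (fun y : R => (y < m)%R) s <= f)%N -> (f < j <= size s)%N -> m <= Pk s j.
Proof.
move=> small fj; have sorted_s : sorted <=%R (sort <=%R s) by exact: sort_le_sorted.
apply: (@sorted_count_lt_le_nth _ _ _ f _ sorted_s); first by rewrite count_sort.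
by rewrite size_sort; set sz := size s in fj *; lia.
Qed.

Lemma Pk_le f s M j :
  (count (fun y : R => (M < y)%R) s <= f)%N -> (0 < j)%N -> (j + f <= size s)%N ->
  Pk s j <= M.
Proof.
move=> large j_gt0 jf; have sorted_s : sorted <=%R (sort <=%R s) by exact: sort_le_sorted.
apply: (@sorted_count_gt_ge_nth _ _ _ f _ sorted_s); first by rewrite count_sort.
by rewrite size_sort; set sz := size s in jf *; lia.
Qed.

Lemma algo_halfway n f s x m M :
  size s = n -> (3 * f < n)%N ->
  (count (fun y : R => (y < m)%R) s <= f)%N -> (count (fun y : R => (M < y)%R) s <= f)%N ->
  m <= x <= M -> (x + m) / 2 <= algo n f s x <= (x + M) / 2.
Proof.
move=> sz nf small large /andP[mx xM].
have /andP[ma aM] : m <= Pk s (2 * f).+1 <= M.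
  by rewrite (le_Pk f) ?(Pk_le f) //; rewrite ?sz; lia.
have /andP[mb bM] : m <= Pk s (n - 2 * f) <= M.
  by rewrite (le_Pk f) ?(Pk_le f) //; rewrite ?sz; lia.
rewrite /algo; case: ifP => _; last by apply/andP; split; lra.
rewrite minEle maxEle.
by case: (lerP x (Pk s (2 * f).+1)); case: (lerP x (Pk s (n - 2 * f))) => *;
  apply/andP; split; lra.
Qed.

End Algorithm.

Section Intervals.
Context {R : realType}.

Lemma between_mem_itv [a x b m M : R] :
  between a x b -> m <= a <= M -> m <= b <= M -> m <= x <= M.
Proof.
rewrite /between minEle maxEle => /andP[lo hi] /andP[ma aM] /andP[mb bM].
by case: ifP lo hi => _ lo hi; apply/andP; split; lra.
Qed.

Lemma between_halfway [x y d m M : R] :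
  between x y d -> m <= x <= M -> (x + m) / 2 <= d <= (x + M) / 2 ->
  (y + m) / 2 <= d <= (y + M) / 2.
Proof.
rewrite /between minEle maxEle => /andP[lo hi] /andP[mx xM] /andP[dm dM].
by case: ifP lo hi => _ lo hi; apply/andP; split; lra.
Qed.

Lemma halfway_mem_itv [x d m M : R] :
  m <= x <= M -> (x + m) / 2 <= d <= (x + M) / 2 -> m <= d <= M.
Proof. by move=> /andP[mx xM] /andP[dm dM]; apply/andP; split; lra. Qed.

Lemma seqmin_le_le_seqmax (s : seq R) (x : R) :
  x \in s -> seqmin s <= x <= seqmax s.
Proof.
by move=> xs; apply/andP; split; [exact: ge_bigmin_seq | exact: le_bigmax_seq].
Qed.

End Intervals.

Lemma dest_halfway {R : realType} {n f : nat} {byz : {set 'I_n}}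
    {pos : 'I_n -> R -> R} {L : 'I_n -> nat -> R} [j : 'I_n] [k : nat] [m M : R] :
  (3 * f < n)%N -> (#|byz| <= f)%N -> j \notin byz ->
  (forall i, i \notin byz -> m <= pos i (L j k) <= M) ->
  (pos j (L j k) + m) / 2 <= dest f pos L j k <= (pos j (L j k) + M) / 2.
Proof.
move=> nf byzf j_correct correct_in.
have outliers_byz (P : pred 'I_n) :
    (forall i, i \notin byz -> ~~ P i) -> (count P (enum 'I_n) <= f)%N.
  move=> notP; rewrite count_enum; apply: leq_trans byzf.
  by apply/subset_leq_card/subsetP => i; apply: contraLR; apply: notP.
apply: algo_halfway; last exact: correct_in.
- by rewrite size_map size_enum_ord.
- done.
- rewrite count_map; apply: outliers_byz => i /correct_in /andP[+ _].
  by rewrite -leNgt.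
- rewrite count_map; apply: outliers_byz => i /correct_in /andP[_ +].
  by rewrite -leNgt.
Qed.

Section Execution.
Context {R : realType} {n f : nat} {byz : {set 'I_n}} {pos : 'I_n -> R -> R}
  {L M E : 'I_n -> nat -> R} {delta : 'I_n -> R}.
Hypothesis exec : corda_exec f pos L M E byz delta.

Section Robot.
Variable j : 'I_n.
Hypothesis j_correct : j \notin byz.

Lemma move_end_lt_look k : E j k < L j k.+1.
Proof. by have [[_ /(_ k)[_ [_ EL]] _] _] := exec j j_correct. Qed.

Lemma look_lt_next k : L j k < L j k.+1.
Proof.
have [[_ /(_ k)[LM [ME _]] _] _] := exec j j_correct.
exact: le_lt_trans LM (le_lt_trans ME (move_end_lt_look k)).
Qed.

Lemma look_mono : {homo L j : k k' / (k <= k')%N >-> k <= k'}.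
Proof. exact: homo_leq lexx le_trans (fun k => ltW (look_lt_next k)). Qed.

Lemma Dest_cycle [k : nat] [t : R] :
  L j k <= t -> t < L j k.+1 -> Dest f pos L j t = dest f pos L j k.
Proof.
move=> Lkt tLk; rewrite /Dest; case: pselect => [ex|]; last by case; exists k.
case: constructive_indefinite_description => k' /= [Lk't tLk'].
have [lt_k'k|lt_kk'|-> //] := ltngtP k' k.
- by have := lt_le_trans tLk' (le_trans (look_mono _ _ lt_k'k) Lkt); rewrite ltxx.
- by have := lt_le_trans tLk (le_trans (look_mono _ _ lt_kk') Lk't); rewrite ltxx.
Qed.

Lemma pos_before_move k s : L j k <= s <= M j k -> pos j s = pos j (M j k).
Proof.
have [[L0 _ _] [idle0 idle _ _]] := exec j j_correct.
case: k => [|k] /andP[Ls sM].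
  have s_ge0 := le_trans L0 Ls.
  by rewrite (idle0 s) ?(idle0 (M j 0)) ?s_ge0 ?(le_trans s_ge0 sM) ?lexx.
have Es := ltW (lt_le_trans (move_end_lt_look k) Ls).
by rewrite (idle k s) ?(idle k (M j k.+1)) ?Es ?(le_trans Es sM) ?lexx.
Qed.

Lemma pos_after_move k s : E j k <= s <= L j k.+1 -> pos j s = pos j (E j k).
Proof.
have [[_ cycle _] [_ idle _ _]] := exec j j_correct.
have [LM _] := cycle k.+1.
by move=> /andP[Es sL]; apply: idle; rewrite Es (le_trans sL LM).
Qed.

Lemma pos_cycle_clamp k s : L j k <= s <= L j k.+1 ->
  pos j s = pos j (Num.max (M j k) (Num.min (E j k) s)).
Proof.
have [[_ /(_ k)[_ [ME _]] _] _] := exec j j_correct.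
move=> /andP[Ls sL]; have [sM|Ms] := leP s (M j k).
  by rewrite (min_idPr (le_trans sM ME)) (max_idPl sM) (pos_before_move k) ?Ls.
have [sE|Es] := leP s (E j k).
  by rewrite (max_idPr (ltW Ms)).
by rewrite (max_idPr ME) (pos_after_move k) ?(ltW Es).
Qed.

Lemma pos_between_cycle [k : nat] [a u : R] :
  L j k <= a -> a <= u -> u <= L j k.+1 ->
  between (pos j a) (pos j u) (dest f pos L j k).
Proof.
have [[_ /(_ k)[_ [ME _]] _] [_ _ move _]] := exec j j_correct.
move=> La au uL.
rewrite (pos_cycle_clamp k a) ?La ?(le_trans au uL) //.
rewrite (pos_cycle_clamp k u) ?uL ?(le_trans La au) //.
apply: move; first by rewrite le_max lexx.
  by apply: le_max2 => //; apply: le_min2.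
by rewrite ge_max ME ge_min lexx.
Qed.

Lemma pos_in_itv [t0 T m Mx : R] :
  0 <= t0 -> m <= pos j t0 <= Mx -> m <= Dest f pos L j t0 <= Mx ->
  (forall k, t0 <= L j k -> L j k < T -> m <= dest f pos L j k <= Mx) ->
  forall s, t0 <= s -> s <= T -> m <= pos j s <= Mx.
Proof.
move=> t0_ge0 pos_t0 Dest_t0 dest_in s t0s sT.
have [[_ /(_ 0%N)[LM0 _] unbounded] [idle0 _ _ _]] := exec j j_correct.
have [K sLK] := unbounded s.
elim: K s t0s sT sLK => [|K IH] s t0s sT sLK.
  have sM0 := le_trans sLK LM0.
  by rewrite idle0 -?(idle0 t0) ?t0_ge0 ?(le_trans t0_ge0 t0s) ?(le_trans t0s sM0) ?sM0.
have [sLK'|LKs] := leP s (L j K); first exact: IH.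
have [t0LK|LKt0] := leP t0 (L j K).
  apply: between_mem_itv (pos_between_cycle (lexx _) (ltW LKs) sLK) _ _.
    exact: IH t0LK (le_trans (ltW LKs) sT) (lexx _).
  exact: dest_in t0LK (lt_le_trans LKs sT).
have [t0LK'|LK't0] := ltP t0 (L j K.+1).
  apply: between_mem_itv (pos_between_cycle (ltW LKt0) t0s sLK) pos_t0 _.
  by rewrite -(Dest_cycle (ltW LKt0) t0LK').
by rewrite (@le_anti _ _ s t0) ?t0s ?(le_trans sLK LK't0).
Qed.

End Robot.

(* The first robot to compute a destination outside [m, Mx] after t0 would have
   seen all correct robots inside [m, Mx] at its Look, so the algorithm would have
   kept it inside. *)
Lemma dest_in_itv [t0 m Mx : R] : (3 * f < n)%N -> (#|byz| <= f)%N -> 0 <= t0 ->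
  (forall i, i \notin byz -> m <= pos i t0 <= Mx) ->
  (forall i, i \notin byz -> m <= Dest f pos L i t0 <= Mx) ->
  forall j k, j \notin byz -> t0 <= L j k -> m <= dest f pos L j k <= Mx.
Proof.
move=> nf byzf t0_ge0 pos_t0 Dest_t0 j k j_correct t0L.
pose bad i k := [&& i \notin byz, t0 <= L i k & ~~ (m <= dest f pos L i k <= Mx)].
apply/contraT => dest_out; have bad_jk : bad j k by apply/and3P.
pose first_bad i := if pselect (exists k, bad i k) is left ex then ex_minn ex else 0%N.
have first_badP i k' : bad i k' -> bad i (first_bad i) /\ (first_bad i <= k')%N.
  move=> bad_ik'; rewrite /first_bad; case: pselect => [ex|[]]; last by exists k'.
  by case: ex_minnP => k0 bad_k0 min_k0; split; last exact: min_k0.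
pose has_bad i := `[< exists k, bad i k >].
have has_bad_j : has_bad j by apply/asboolP; exists k.
case: (arg_minP (fun i => L i (first_bad i)) has_bad_j) => i0 /asboolP[k0 bad_k0] i0_min.
have [/and3P[i0_correct t0T out_T] _] := first_badP i0 k0 bad_k0.
have earlier_in i : i \notin byz ->
    forall k', t0 <= L i k' -> L i k' < L i0 (first_bad i0) -> m <= dest f pos L i k' <= Mx.
  move=> i_correct k' t0L' L'T; apply/contraT => out.
  have bad_ik' : bad i k' by apply/and3P.
  have [_ first_le] := first_badP i k' bad_ik'.
  have := i0_min i (asboolT (ex_intro _ k' bad_ik')).
  move/le_trans/(_ (look_mono i i_correct _ _ first_le)).
  by move/(lt_le_trans L'T); rewrite ltxx.
have pos_T i : i \notin byz -> m <= pos i (L i0 (first_bad i0)) <= Mx.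
  move=> i_correct.
  apply: (pos_in_itv i i_correct t0_ge0) (earlier_in i i_correct) _ t0T (lexx _).
  - exact: pos_t0.
  - exact: Dest_t0.
have := dest_halfway (L := L) (k := first_bad i0) nf byzf i0_correct pos_T.
by move/(halfway_mem_itv (pos_T i0 i0_correct)) => in_T; rewrite in_T in out_T.
Qed.

Lemma pos_in_itv_after [t0 m Mx : R] : (3 * f < n)%N -> (#|byz| <= f)%N -> 0 <= t0 ->
  (forall i, i \notin byz -> m <= pos i t0 <= Mx) ->
  (forall i, i \notin byz -> m <= Dest f pos L i t0 <= Mx) ->
  forall j s, j \notin byz -> t0 <= s -> m <= pos j s <= Mx.
Proof.
move=> nf byzf t0_ge0 pos_t0 Dest_t0 j s j_correct t0s.
apply: (pos_in_itv j j_correct t0_ge0) t0s (lexx s).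
- exact: pos_t0.
- exact: Dest_t0.
- by move=> k t0L _; apply: (dest_in_itv nf byzf t0_ge0 pos_t0 Dest_t0).
Qed.

End Execution.

Theorem lemma9 (R : realType) (n f : nat) (byz : {set 'I_n})
    (pos : 'I_n -> R -> R) (L M E : 'I_n -> nat -> R) (delta : 'I_n -> R) :
  (5 * f < n)%N -> (#|byz| <= f)%N ->
  corda_exec f pos L M E byz delta ->
  forall t0 : R, 0 <= t0 ->
  forall (i : 'I_n), i \notin byz ->
  forall k : nat, t0 <= L i k ->
  forall t : R, L i k <= t -> t <= E i k ->
  (pos i t + seqmin (UD f pos L byz t0)) / 2 <= Dest f pos L i t
  <= (pos i t + seqmax (UD f pos L byz t0)) / 2.
Proof.
move=> n5f byzf exec t0 t0_ge0 i i_correct k t0L t Lt tE.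
have nf : (3 * f < n)%N by lia.
set m := seqmin _; set Mx := seqmax _.
have UD_bounds x : x \in UD f pos L byz t0 -> m <= x <= Mx by exact: seqmin_le_le_seqmax.
have pos_t0 j : j \notin byz -> m <= pos j t0 <= Mx.
  move=> j_correct; apply/UD_bounds/flatten_mapP.
  by exists j; rewrite ?mem_enum ?inE ?eqxx.
have Dest_t0 j : j \notin byz -> m <= Dest f pos L j t0 <= Mx.
  move=> j_correct; apply/UD_bounds/flatten_mapP.
  by exists j; rewrite ?mem_enum ?inE ?eqxx ?orbT.
have pos_in := pos_in_itv_after exec nf byzf t0_ge0 pos_t0 Dest_t0.
have tL := le_lt_trans tE (move_end_lt_look exec i i_correct k).
rewrite (Dest_cycle exec i i_correct Lt tL).
apply: between_halfway (pos_between_cycle exec i i_correct (lexx _) Lt (ltW tL)) _ _.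
  exact: pos_in i _ i_correct t0L.
apply: dest_halfway nf byzf i_correct _ => j j_correct.
exact: pos_in j _ j_correct t0L.
Qed.
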